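(* Let $q=2^m$ with $m\ge 6$ even, and let $\mathbb D$ be the $3$-$(q+1,q-4,(q-4)(q-5)(q-6)/60)$ design $(U_{q+1},\mathcal B_{q-4}(\mathrm{Tr}_{q^2/q}(\mathcal C_{\{3,5\}})))$. Then $\dim_q\mathbb D=4$.
   Context: $U_{q+1}$ is the set of $(q+1)$-th roots of unity in $\mathrm{GF}(q^2)$; coordinates are indexed by $U_{q+1}$. $\mathcal C_{\{3,5\}}=\{(a_3u^3+a_{q-2}u^{q-2}+a_5u^5+a_{q-4}u^{q-4})_{u\in U_{q+1}}: a_i\in\mathrm{GF}(q^2)\}$; $\mathrm{Tr}_{q^2/q}(\mathcal C)$ is obtained by applying $x\mapsto x+x^q$ coordinatewise; $\mathcal B_w(\mathcal C)$ is the set of supports of codewords of Hamming weight $w$. The dimension $\dim_q\mathbb D$ of a design over $\mathrm{GF}(q)$ is the minimum rank over $\mathrm{GF}(q)$ among all matrices obtained from its $(0,1)$ block-by-point incidence matrix by replacing each $1$ with an arbitrary nonzero element of $\mathrm{GF}(q)$. *)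

From HB Require Import structures.
From mathcomp Require Import all_boot all_order all_algebra all_field.
Set Implicit Arguments. Unset Strict Implicit. Unset Printing Implicit Defensive.
Import GRing.Theory.
Local Open Scope ring_scope.

Definition Uroots (F : finFieldType) (q : nat) : {set F} :=
  [set u : F | u ^+ q.+1 == 1].

Definition trq (F : finFieldType) (q : nat) (x : F) : F := x + x ^+ q.

(* The codeword of C_{3,5} with coefficients (a3, a_{q-2}, a5, a_{q-4}),
   evaluated at u. *)
Definition C35 (F : finFieldType) (q : nat) (a3 aqm2 a5 aqm4 : F) (u : F) : F :=
  a3 * u ^+ 3 + aqm2 * u ^+ (q - 2) + a5 * u ^+ 5 + aqm4 * u ^+ (q - 4).

Definition trSupport (F : finFieldType) (q : nat) (a3 aqm2 a5 aqm4 : F) : {set F} :=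
  [set u in Uroots F q | trq q (C35 q a3 aqm2 a5 aqm4 u) != 0].

Definition blocksW (F : finFieldType) (q w : nat) : {set {set F}} :=
  [set S : {set F} | [exists a : F * F * F * F,
     (S == trSupport q a.1.1.1 a.1.1.2 a.1.2 a.2) && (#|S| == w)]].

(* Matrices over K obtained from the block-by-point incidence matrix of the
   design (P, B) by replacing each 1 with an arbitrary nonzero element of K. *)
Definition nz_incidence (K F : finFieldType) (P : {set F}) (B : {set {set F}})
  (M : 'M[K]_(#|B|, #|P|)) : Prop :=
  forall (i : 'I_#|B|) (j : 'I_#|P|),
    (M i j != 0) = (enum_val j \in enum_val i).

Definition design_dim_eq (K F : finFieldType) (P : {set F}) (B : {set {set F}})
  (d : nat) : Prop :=
  (exists M : 'M[K]_(#|B|, #|P|), nz_incidence M /\ \rank M = d) /\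
  (forall M : 'M[K]_(#|B|, #|P|), nz_incidence M -> (d <= \rank M)%N).

From HB Require Import structures.
From mathcomp Require Import all_boot all_order all_algebra all_field.
From mathcomp Require Import cyclic ring zify.
Set Implicit Arguments.
Unset Strict Implicit.
Unset Printing Implicit Defensive.
Import GRing.Theory.
Local Open Scope ring_scope.

(* Lower bound: for [z] on the unit circle [U] and a suitable [k], the trace
   of the codeword with [a_3 = (k mu z)^2], [a_5 = k^2] (for a fixed [mu])
   equals [u^-5 (k Pi_z(u))^2] on [U], where [Pi_z(u) = prod_(x in z S) (u + x)]
   and [S = {1, t, t^-1, s, s^-1}] is chosen so that [Pi_z] has only four
   terms. Hence [U \ z S] is a block, and four such blocks with four suitable
   points form a triangular configuration: every matrix with the block-point
   incidence pattern has a nonsingular triangular 4x4 minor.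
   Upper bound: on [U], [Tr(c(u)) = Tr(alpha u^3) + Tr(beta u^5)], and writing
   [alpha], [beta] in the basis [1, t] of [GF(q^2)] over [GF(q)] makes it a sum
   of four products of a [GF(q)]-valued function of the block and one of the
   point. Transported to [K] through an isomorphism of [K] onto the subfield
   [GF(q)] of [F], this factors an incidence-pattern matrix through [K^4]. *)

Lemma rank_geq_triangular (R : fieldType) m n k (M : 'M[R]_(m, n))
    (r : 'I_k -> 'I_m) (c : 'I_k -> 'I_n) :
  (forall i j : 'I_k, (i < j)%N -> M (r i) (c j) = 0) ->
  (forall i, M (r i) (c i) != 0) -> (k <= \rank M)%N.
Proof.
move=> M_upper M_diag; pose N := rowsub r (colsub c M).
have -> : k = \rank N.
  apply/esym/mxrank_unit; rewrite unitmxE unitfE det_trig.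
    by rewrite prodf_seq_neq0; apply/allP => i _; rewrite !mxE M_diag.
  by apply/is_trig_mxP => i j ij; rewrite !mxE M_upper.
rewrite /N rowsubE.
have -> : colsub c M = M *m colsub c 1%:M by rewrite mulmx_colsub mulmx1.
rewrite mulmxA.
exact: leq_trans (mxrankM_maxl _ _) (mxrankM_maxr _ _).
Qed.

(** * Finite fields *)

Lemma finField_prim_root_exists (K : finFieldType) :
  exists g : K, #|K|.-1.-primitive_root g.
Proof.
have K1 := finNzRing_gt1 K.
have /hasP[g _ pg] : has #|K|.-1.-primitive_root (enum (predC1 (0 : K))).
  apply: has_prim_root; rewrite ?enum_uniq -?cardE ?cardC1 //.
    by rewrite -subn1 subn_gt0.
  apply/allP => x; rewrite mem_enum /= => nz.
  by rewrite unity_rootE -(inj_eq (mulfI nz)) -exprS prednK ?expf_card ?mulr1 // ltnW.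
by exists g.
Qed.

Lemma finField_prim_root_dvd (K : finFieldType) n :
  (n %| #|K|.-1)%N -> exists z : K, n.-primitive_root z.
Proof.
have [g g_prim] := finField_prim_root_exists K.
by move=> n_dvd; exists (g ^+ (#|K|.-1 %/ n)); apply: dvdn_prim_root.
Qed.

Lemma dvdp_prod_XsubC_root (F : fieldType) (s : seq F) (r : {poly F}) :
  (1 < size r)%N -> r %| \prod_(x <- s) ('X - x%:P) -> exists x, root r x.
Proof.
move=> r_gt1 /dvdp_prod_XsubC[msk r_eqp].
move: r_eqp; case: (mask msk s) => [|x s'] r_eqp.
  by move: r_gt1; rewrite (eqp_size r_eqp) big_nil size_poly1.
by exists x; rewrite (eqp_root r_eqp) root_prod_XsubC mem_head.
Qed.

Lemma expf_card_pow (K : finFieldType) n (x : K) : x ^+ (#|K| ^ n) = x.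
Proof. by elim: n => [|n IHn]; rewrite ?expr1 // expnSr exprM IHn expf_card. Qed.

Section FinFieldEmbedding.

Variables (p k : nat) (K F : finFieldType).
Hypotheses (pcharK : p \in [pchar K]) (pcharF : p \in [pchar F]).
Hypothesis cardF : #|F| = (#|K| ^ k)%N.

Local Notation Kp := (pPrimeCharType pcharK).
Local Notation Fp := (pPrimeCharType pcharF).

Let gen : Kp := xchoose (finField_prim_root_exists K).
Let gen_prim : #|K|.-1.-primitive_root gen :=
  xchooseP (finField_prim_root_exists K).
Local Notation evK r := (map_poly (in_alg Kp) r).[gen].

Lemma gen_minPoly_over_Fp : exists r, minPoly 1 gen == map_poly (in_alg Kp) r.
Proof. by have /polyOver1P[r ->] := minPolyOver 1 gen; exists r. Qed.

Let gen_minpoly := xchoose gen_minPoly_over_Fp.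
Let gen_minpolyE : minPoly 1 gen = map_poly (in_alg Kp) gen_minpoly :=
  eqP (xchooseP gen_minPoly_over_Fp).

Lemma gen_minpoly_dvdp (r : {poly 'F_p}) :
  root (map_poly (in_alg Kp) r) gen -> gen_minpoly %| r.
Proof.
move=> r_gen; rewrite -(dvdp_map (in_alg Kp)) -gen_minpolyE minPoly_dvdp //.
by apply/polyOver1P; exists r.
Qed.

Lemma gen_minpoly_root_exists : exists h : Fp, root (map_poly (in_alg Fp) gen_minpoly) h.
Proof.
apply: (@dvdp_prod_XsubC_root _ (enum Fp)).
  by rewrite size_map_poly -(size_map_poly (in_alg Kp)) -gen_minpolyE size_minPoly.
rewrite big_enum -finField_genPoly.
have : gen_minpoly %| 'X^#|F| - 'X.
  apply: gen_minpoly_dvdp; rewrite rmorphB rmorphXn /= map_polyX rootE !hornerE cardF.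
  by rewrite expf_card_pow subrr.
by rewrite -(dvdp_map (in_alg Fp)) rmorphB rmorphXn /= map_polyX.
Qed.

Let img : Fp := xchoose gen_minpoly_root_exists.
Local Notation evF r := (map_poly (in_alg Fp) r).[img].

Lemma gen_poly_surj (x : K) : exists r, evK r == x.
Proof.
have [-> | x_nz] := eqVneq x 0; first by exists 0; rewrite rmorph0 horner0.
have : x ^+ #|K|.-1 = 1.
  apply: (mulfI x_nz); rewrite -exprS prednK ?expf_card ?mulr1 //.
  exact: ltnW (finNzRing_gt1 K).
case/(prim_rootP gen_prim) => i ->.
by exists 'X^i; rewrite rmorphXn /= map_polyX hornerXn.
Qed.

(* Well defined: a polynomial vanishing at [gen] is a multiple of [gen_minpoly],
   which vanishes at [img]. *)
Definition finField_embed (x : K) : F := evF (xchoose (gen_poly_surj x)).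

Lemma finField_embed_poly r :
  finField_embed (evK r) = evF r.
Proof.
rewrite /finField_embed; set r' := xchoose _.
have /eqP r'E := xchooseP (gen_poly_surj (evK r)).
have /dvdpP[d r'_r] : gen_minpoly %| r' - r.
  by apply: gen_minpoly_dvdp; rewrite rmorphB rootE hornerD hornerN r'E subrr.
have : root (map_poly (in_alg Fp) (r' - r)) img.
  by rewrite r'_r rmorphM rootE hornerM (rootP (xchooseP gen_minpoly_root_exists)) mulr0.
by rewrite rmorphB rootE hornerD hornerN subr_eq0 => /eqP.
Qed.

Lemma finField_embed_is_zmod_morphism : zmod_morphism finField_embed.
Proof.
move=> x y; have [rx /eqP <-] := gen_poly_surj x; have [ry /eqP <-] := gen_poly_surj y.
have -> : evK rx - evK ry = evK (rx - ry) by rewrite rmorphB hornerD hornerN.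
by rewrite !finField_embed_poly rmorphB hornerD hornerN.
Qed.

Lemma finField_embed_is_monoid_morphism : monoid_morphism finField_embed.
Proof.
split.
  have -> : 1 = evK 1 by rewrite rmorph1 hornerC.
  by rewrite finField_embed_poly rmorph1 hornerC.
move=> x y; have [rx /eqP <-] := gen_poly_surj x; have [ry /eqP <-] := gen_poly_surj y.
have -> : evK rx * evK ry = evK (rx * ry) by rewrite rmorphM hornerM.
by rewrite !finField_embed_poly rmorphM hornerM.
Qed.

HB.instance Definition _ := GRing.isZmodMorphism.Build K F finField_embed
  finField_embed_is_zmod_morphism.
HB.instance Definition _ := GRing.isMonoidMorphism.Build K F finField_embed
  finField_embed_is_monoid_morphism.

End FinFieldEmbedding.

Lemma fmorph_finField_onto (K F : finFieldType) (f : {rmorphism K -> F}) y :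
  y ^+ #|K| = y -> exists x, f x = y.
Proof.
have size_Xq : size ('X^#|K| - 'X : {poly F}) = #|K|.+1.
  by rewrite size_polyDl ?size_polyXn // size_polyN size_polyX ltnS finNzRing_gt1.
pose G := [set y : F | y ^+ #|K| == y].
have G_small : (#|G| <= #|K|)%N.
  rewrite cardE -ltnS -size_Xq; apply: max_poly_roots; rewrite ?enum_uniq //.
    by rewrite -size_poly_eq0 size_Xq.
  by apply/allP => z; rewrite mem_enum inE rootE !hornerE => /eqP->; rewrite subrr.
have fK_G : f @: setT \subset G.
  by apply/subsetP => _ /imsetP[x _ ->]; rewrite inE -rmorphXn expf_card.
have fK_eq : f @: setT = G.
  by apply/eqP; rewrite eqEcard fK_G card_imset ?cardsT //; apply: fmorph_inj.
move=> yq; have /imsetP[x _ ->] : y \in f @: setT by rewrite fK_eq inE yq.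
by exists x.
Qed.

(** * The trace code on the unit circle *)

Section TraceCode.

Variables (F : finFieldType) (q : nat).
Hypotheses (pchar2F : 2%N \in [pchar F]) (q_pchar : [pchar F].-nat q).
Hypothesis cardF : #|F| = (q ^ 2)%N.

Local Notation U := (Uroots F q).
Implicit Types (a c u v x y : F).

Lemma frobqD (x y : F) : (x + y) ^+ q = x ^+ q + y ^+ q.
Proof. exact: exprDn_pchar. Qed.

Lemma frobqK (x : F) : (x ^+ q) ^+ q = x.
Proof. by rewrite -exprM mulnn -cardF expf_card. Qed.

Lemma addr_eq0_pchar2 (x y : F) : (x + y == 0) = (x == y).
Proof. by rewrite addr_eq0 (oppr_pchar2 pchar2F). Qed.

Lemma UrootsP u : reflect (u ^+ q.+1 = 1) (u \in U).
Proof. by rewrite inE; apply: eqP. Qed.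

Lemma Uroots_neq0 u : u \in U -> u != 0.
Proof.
move/UrootsP => u1; apply/eqP => u0.
by move: u1; rewrite u0 expr0n => /eqP; rewrite eq_sym oner_eq0.
Qed.

Lemma Uroots_frob u : u \in U -> u ^+ q = u^-1.
Proof.
move=> uU; rewrite -[u ^+ q](mulfK (Uroots_neq0 uU)) -exprSr.
by move/UrootsP: uU => ->; rewrite mul1r.
Qed.

Lemma Uroots_frobP u : u != 0 -> u ^+ q = u^-1 -> u \in U.
Proof. by move=> u_nz uq; apply/UrootsP; rewrite exprSr uq mulVf. Qed.

Lemma UrootsM u v : u \in U -> v \in U -> u * v \in U.
Proof. by move=> /UrootsP u1 /UrootsP v1; apply/UrootsP; rewrite exprMn u1 v1 mulr1. Qed.

Lemma UrootsV u : u \in U -> u^-1 \in U.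
Proof. by move=> /UrootsP u1; apply/UrootsP; rewrite exprVn u1 invr1. Qed.

Lemma UrootsX u n : u \in U -> u ^+ n \in U.
Proof. by move=> /UrootsP u1; apply/UrootsP; rewrite exprAC u1 expr1n. Qed.

Lemma trq_frob x : (trq q x) ^+ q = trq q x.
Proof. by rewrite /trq frobqD frobqK addrC. Qed.

Lemma trqD x y : trq q (x + y) = trq q x + trq q y.
Proof. by rewrite /trq frobqD addrACA. Qed.

Lemma trq_frobE x : trq q (x ^+ q) = trq q x.
Proof. by rewrite /trq frobqK addrC. Qed.

Lemma trq_scale c x : c ^+ q = c -> trq q (c * x) = c * trq q x.
Proof. by move=> cq; rewrite /trq exprMn cq mulrDr. Qed.

Section FixedFieldBasis.

Variable th : F.
Hypothesis th_nfixed : th ^+ q != th.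

Definition coord_th (a : F) : F := (a ^+ q + a) / (th ^+ q + th).
Definition coord_1 (a : F) : F := a + coord_th a * th.

Lemma coord_th_fixed a : coord_th a ^+ q = coord_th a.
Proof. by rewrite /coord_th exprMn exprVn !frobqD !frobqK addrC [th + _]addrC. Qed.

Lemma coord_1_fixed a : coord_1 a ^+ q = coord_1 a.
Proof.
have th_nz : th ^+ q + th != 0 by rewrite addr_eq0_pchar2.
apply/eqP; rewrite -addr_eq0_pchar2 /coord_1 frobqD exprMn coord_th_fixed.
have -> : a ^+ q + coord_th a * th ^+ q + (a + coord_th a * th)
        = (a ^+ q + a) + coord_th a * (th ^+ q + th) by ring.
by rewrite /coord_th divfK // addrr_pchar2.
Qed.

Lemma coord_decomp a : a = coord_1 a + coord_th a * th.
Proof. by rewrite /coord_1 -addrA addrr_pchar2 ?addr0. Qed.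

Lemma trq_mul_decomp a x :
  trq q (a * x) = coord_1 a * trq q x + coord_th a * trq q (th * x).
Proof.
rewrite {1}(coord_decomp a) mulrDl trqD -mulrA.
by rewrite (trq_scale _ (coord_1_fixed a)) (trq_scale _ (coord_th_fixed a)).
Qed.

End FixedFieldBasis.

Lemma Uroots_frob_exp_sub u k : u \in U -> (k <= q)%N -> (u ^+ (q - k)) ^+ q = u ^+ k.+1.
Proof.
move=> uU kq; have uk_nz : u ^+ (q - k) != 0 by rewrite expf_neq0 ?Uroots_neq0.
have uk_inv : u ^+ (q - k) * u ^+ k.+1 = 1 by rewrite -exprD addnS subnK //; apply/UrootsP.
by rewrite exprAC Uroots_frob // exprVn -[RHS](mulKf uk_nz) uk_inv mulr1.
Qed.

Lemma trq_C35 u a3 a3' a5 a5' : u \in U -> (4 <= q)%N ->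
  trq q (C35 q a3 a3' a5 a5' u)
  = trq q ((a3 + a3' ^+ q) * u ^+ 3) + trq q ((a5 + a5' ^+ q) * u ^+ 5).
Proof.
move=> uU q4; rewrite /C35 !trqD -(trq_frobE (a3' * _)) -(trq_frobE (a5' * _)).
rewrite !exprMn !Uroots_frob_exp_sub //; last exact: leq_trans q4.
by rewrite !mulrDl !trqD; ring.
Qed.

Variable t : F.
Hypothesis t_prim : q.+1.-primitive_root t.
Hypothesis q_gt5 : (5 < q)%N.

Lemma t_U : t \in U.
Proof. exact/UrootsP/(prim_expr_order t_prim). Qed.

Lemma t_neq0 : t != 0.
Proof. exact: Uroots_neq0 t_U. Qed.

Lemma t_expr_neq1 k : (0 < k < q.+1)%N -> t ^+ k != 1.
Proof.
case/andP=> k_gt0 k_lt; rewrite -(prim_order_dvd t_prim).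
by apply: contraTN k_lt => /(dvdn_leq k_gt0); rewrite leqNgt.
Qed.

Lemma t_neq_inv : t != t^-1.
Proof.
apply: contra_neq (t_expr_neq1 (k := 2) _); last by lia.
by move=> tE; rewrite expr2 {2}tE mulfV ?t_neq0.
Qed.

Lemma t_nfixed : t ^+ q != t.
Proof. by rewrite Uroots_frob ?t_U // eq_sym t_neq_inv. Qed.

Lemma card_Uroots : #|U| = q.+1.
Proof.
have -> : U = (fun i : 'I_q.+1 => t ^+ i) @: setT.
  apply/setP => u; apply/UrootsP/imsetP => [/(prim_rootP t_prim)[i ->] | [i _ ->]].
    by exists i.
  exact/UrootsP/UrootsX/t_U.
rewrite card_imset ?cardsT ?card_ord // => i j /eqP.
by rewrite (eq_prim_root_expr t_prim) !modn_small // => /eqP/val_inj.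
Qed.

(** * Lower bound: a triangular configuration *)

Variable w : F.
Hypotheses (w_prim : 3.-primitive_root w) (q_mod3 : (q %% 3 = 1)%N).

Lemma w_frob : w ^+ q = w.
Proof. by rewrite -(expr_mod _ (prim_expr_order w_prim)) q_mod3 expr1. Qed.

Lemma w_cyclotomic : w ^+ 2 + w + 1 = 0.
Proof.
have w_neq1 : w != 1 by rewrite -[w]expr1 -(prim_order_dvd w_prim).
have : (w - 1) * (w ^+ 2 + w + 1) = 0.
  by rewrite -(subrr 1) -{3}(prim_expr_order w_prim); ring.
by move/eqP; rewrite mulf_eq0 subr_eq0 (negbTE w_neq1) => /eqP.
Qed.

Let two0 : 2 = 0 :> F := pcharf0 pchar2F.

Definition trA := t + t^-1.

Lemma trA_neq0 : trA != 0.
Proof. by rewrite /trA addr_eq0_pchar2 t_neq_inv. Qed.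

Lemma trA1_neq0 : trA + 1 != 0.
Proof.
apply: contra_neq (t_expr_neq1 (k := 3) _) => [trA1|]; last by lia.
have -> : t ^+ 3 = (t - 1) * (t * (trA + 1)) + 1 by rewrite /trA; field; exact: t_neq0.
by rewrite trA1 !mulr0 add0r.
Qed.

Lemma trA_frob : trA ^+ q = trA.
Proof. by rewrite /trA frobqD exprVn Uroots_frob ?t_U // invrK addrC. Qed.

(* Chosen so that [trB := s + s^-1] satisfies [trAB_rel]; this is where the cube
   root of unity [w] is needed. *)
Definition s := (t + trA * w) / (trA + 1).

Lemma s_frob : s ^+ q = (t^-1 + trA * w) / (trA + 1).
Proof.
rewrite /s exprMn exprVn (frobqD trA) (frobqD t) exprMn trA_frob w_frob expr1n.
by rewrite Uroots_frob ?t_U.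
Qed.

Lemma s_mul_frob : s * s ^+ q = 1.
Proof.
rewrite s_frob.
rewrite /s mulrACA -invfM -expr2.
have -> : (t + trA * w) * (t^-1 + trA * w)
    = (trA + 1) ^+ 2 - 2 * (trA ^+ 2 + trA) + trA ^+ 2 * (w ^+ 2 + w + 1).
  by rewrite /trA; field; exact: t_neq0.
by rewrite w_cyclotomic two0 mul0r mulr0 subr0 addr0 divff // expf_neq0 // trA1_neq0.
Qed.

Lemma s_neq0 : s != 0.
Proof. by apply: contra_eq_neq s_mul_frob => ->; rewrite mul0r eq_sym oner_neq0. Qed.

Lemma s_U : s \in U.
Proof.
apply: Uroots_frobP s_neq0 _.
by rewrite -[RHS]mulr1 -s_mul_frob mulKf ?s_neq0.
Qed.

Definition trB := s + s^-1.

Lemma trAB_rel : trA * trB + trA + trB = 0.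
Proof.
have -> : trA * trB + trA + trB = 2 * (trA * (1 + w)).
  rewrite /trB -Uroots_frob ?s_U // s_frob /s /trA; field.
  have -> : t * t + 1 + t = t * (trA + 1) by rewrite /trA; field; exact: t_neq0.
  by rewrite t_neq0 mulf_neq0 ?t_neq0 ?trA1_neq0.
by rewrite two0 mul0r.
Qed.

Lemma trB_neq0 : trB != 0.
Proof.
apply: contra_neq trA_neq0 => trB0.
by move: trAB_rel; rewrite trB0 mulr0 add0r addr0.
Qed.

Lemma trB_neq_trA : trB != trA.
Proof.
apply: contra_neq trA_neq0 => trBA; apply/eqP.
move: trAB_rel; rewrite trBA -addrA addrr_pchar2 // addr0 => /eqP.
by rewrite mulf_eq0 orbb.
Qed.

Lemma s_neq_inv : s != s^-1.
Proof. by apply: contra_neq trB_neq0 => sE; rewrite /trB -sE addrr_pchar2. Qed.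

Definition zeros_base : seq F := [:: 1; t; t^-1; s; s^-1].

Lemma zeros_base_uniq : uniq zeros_base.
Proof.
have neq_inv_sum x y : x + x^-1 != y + y^-1 -> x != y by apply: contra_neq => ->.
have sum1 : 1 + 1^-1 = 0 :> F by rewrite invr1 addrr_pchar2.
have sum_inv x : x^-1 + x^-1^-1 = x + x^-1 by rewrite invrK addrC.
rewrite /= !inE !negb_or t_neq_inv s_neq_inv /= !andbT.
by do !(apply/andP; split); apply: neq_inv_sum;
  rewrite ?sum1 ?sum_inv -/trA -/trB ?trA_neq0 ?trB_neq0 ?trB_neq_trA //
  eq_sym ?trA_neq0 ?trB_neq0 ?trB_neq_trA.
Qed.

Lemma zeros_base_sub_U : {subset zeros_base <= U}.
Proof.
by apply/allP; rewrite /= !UrootsV ?t_U ?s_U // inE expr1n eqxx.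
Qed.

Lemma t_pm_expr_neq1 x k : x \in [:: t; t^-1] -> (0 < k < q.+1)%N -> x ^+ k != 1.
Proof.
move=> xt k_in; case/predU1P: xt => [|/predU1P[|//]] ->;
  by rewrite ?exprVn ?invr_eq1 t_expr_neq1.
Qed.

Lemma trB_neq_sqr x : x \in [:: t; t^-1] -> trB != x ^+ 2 + (x ^+ 2)^-1.
Proof.
move=> xt; have x1 : x != 1 by rewrite -[x]expr1 t_pm_expr_neq1 //; lia.
have x_nz : x != 0.
  by case/predU1P: xt => [|/predU1P[|//]] ->; rewrite ?invr_eq0 t_neq0.
have trAx : trA = x + x^-1.
  by case/predU1P: xt => [|/predU1P[|//]] ->; rewrite /trA ?invrK // addrC.
apply/negP => /eqP trBx.
have : x ^+ 3 * (trA * trB + trA + trB) = (x + 1) * (x ^+ 5 + 1) + 2 * (x ^+ 4 + x ^+ 2).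
  by rewrite trAx trBx; field.
rewrite trAB_rel mulr0 two0 mul0r addr0 => /esym/eqP.
rewrite mulf_eq0 !addr_eq0_pchar2 (negbTE x1) (negbTE (t_pm_expr_neq1 (k := 5) xt _)) //; lia.
Qed.

Lemma sqr_notin_zeros_base x : x \in [:: t; t^-1] -> x ^+ 2 \notin zeros_base.
Proof.
move=> xt; have x_nz : x != 0.
  by case/predU1P: xt => [|/predU1P[|//]] ->; rewrite ?invr_eq0 t_neq0.
suff : x ^+ 2 \notin [:: 1; x; x^-1; s; s^-1].
  apply: contra; rewrite !inE; case/predU1P: xt => [->|/predU1P[->|//]] //.
  by rewrite invrK => /orP[->|/orP[->|/orP[->|->]]]; rewrite ?orbT.
have x2_x : (x ^+ 2 == x) = false.
  apply/negbTE; apply: contra_neq (t_pm_expr_neq1 (k := 1) xt _) => [x2|]; last by lia.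
  by apply: (mulIf x_nz); rewrite mul1r -expr2 expr1.
have x2_xV : (x ^+ 2 == x^-1) = false.
  apply/negbTE; apply: contra_neq (t_pm_expr_neq1 (k := 3) xt _) => [x2|]; last by lia.
  by rewrite exprSr x2 mulVf.
rewrite !inE (negbTE (t_pm_expr_neq1 (k := 2) xt _)) ?x2_x ?x2_xV /=; last by lia.
apply/negP => /orP sx2; apply: (negP (trB_neq_sqr xt)); apply/eqP.
by case: sx2 => /eqP sE; rewrite /trB ?sE ?invrK // addrC.
Qed.

Definition zeros (z : F) : seq F := [seq z * x | x <- zeros_base].

Lemma zeros_uniq z : z != 0 -> uniq (zeros z).
Proof. by move=> z_nz; rewrite map_inj_uniq ?zeros_base_uniq //; apply: mulfI. Qed.

Lemma mem_zeros z u : z != 0 -> (u \in zeros z) = (z^-1 * u \in zeros_base).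
Proof. by move=> z_nz; rewrite -{1}(mulVKf z_nz u) mem_map //; apply: mulfI. Qed.

Lemma zeros_sub_U z : z \in U -> {subset zeros z <= U}.
Proof. by move=> zU _ /mapP[x /zeros_base_sub_U xU ->]; apply: UrootsM. Qed.

Definition mu := trA + trB + 1.

Lemma mu_frob : mu ^+ q = mu.
Proof.
have trB_frob : trB ^+ q = trB.
  by rewrite /trB frobqD exprVn Uroots_frob ?s_U // invrK addrC.
by rewrite /mu (frobqD (trA + trB)) (frobqD trA) trA_frob trB_frob expr1n.
Qed.

(* The two middle coefficients of the product vanish by [trAB_rel]. *)
Lemma prod_zeros z u : z != 0 ->
  \prod_(x <- zeros z) (u + x) = u ^+ 5 + mu * z * u ^+ 4 + mu * z ^+ 4 * u + z ^+ 5.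
Proof.
move=> z_nz; rewrite big_map !big_cons big_nil !mulr1.
have -> : (u + z) * ((u + z * t) * ((u + z / t) * ((u + z * s) * (u + z / s))))
    = u ^+ 5 + mu * z * u ^+ 4 + mu * z ^+ 4 * u + z ^+ 5
      + (trA * trB + trA + trB + 2) * (z ^+ 2 * u ^+ 3 + z ^+ 3 * u ^+ 2).
  by rewrite /mu /trA /trB; field; rewrite t_neq0 s_neq0.
by rewrite trAB_rel two0 add0r mul0r addr0.
Qed.

Lemma prod_zeros_eq0 z u : (\prod_(x <- zeros z) (u + x) == 0) = (u \in zeros z).
Proof.
rewrite prodf_seq_eq0 -has_pred1; apply: eq_has => x /=.
by rewrite addr_eq0_pchar2 eq_sym.
Qed.

(* On [U], [u^5 Tr(c(u)) = (k Pi_z(u))^2] with [Pi_z] the product above. *)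
Lemma trq_block_codeword z k u : z \in U -> k != 0 -> k ^+ q = k * z ^+ 5 -> u \in U ->
  (trq q (C35 q ((k * mu * z) ^+ 2) 0 (k ^+ 2) 0 u) != 0) = (u \notin zeros z).
Proof.
move=> zU k_nz kq uU; have [z_nz u_nz] := (Uroots_neq0 zU, Uroots_neq0 uU).
rewrite -prod_zeros_eq0 prod_zeros // /trq /C35 !mul0r !addr0 frobqD !exprMn kq mu_frob.
rewrite !Uroots_frob //.
set T := (X in X != 0).
have uT : u ^+ 5 * T = (k * (u ^+ 5 + mu * z * u ^+ 4 + mu * z ^+ 4 * u + z ^+ 5)) ^+ 2.
  rewrite exprMn !(sqrrD, mulr2n, addrr_pchar2 pchar2F, addr0).
  by rewrite /T; field; rewrite z_nz u_nz.
have -> : (T != 0) = (u ^+ 5 * T != 0) by rewrite mulf_eq0 expf_eq0 (negbTE u_nz) andbF.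
by rewrite uT sqrf_eq0 mulf_eq0 (negbTE k_nz).
Qed.

Definition block (z : F) : {set F} := U :\: [set x in zeros z].

Lemma block_in_design z k : z \in U -> k != 0 -> k ^+ q = k * z ^+ 5 ->
  block z \in blocksW F q (q - 4).
Proof.
move=> zU k_nz kq; rewrite inE; apply/existsP.
exists ((k * mu * z) ^+ 2, 0, k ^+ 2, 0); apply/andP; split.
  apply/eqP/setP => u; rewrite /block /trSupport in_setD !in_set andbC.
  by case: eqP => [u1|] //=; rewrite trq_block_codeword //; apply/UrootsP.
have zeros_sub : [set x in zeros z] \subset U.
  by apply/subsetP => x; rewrite inE; apply: zeros_sub_U.
rewrite cardsD (setIidPr zeros_sub) card_Uroots cardsE.
by rewrite (card_uniqP (zeros_uniq (Uroots_neq0 zU))) size_map.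
Qed.

Lemma frob_twist_exists z : z \in U -> z ^+ 3 != 1 ->
  exists2 k, k != 0 & k ^+ q = k * z ^+ 5.
Proof.
move=> zU z3; have z_nz := Uroots_neq0 zU.
exists (z^-1 + (z ^+ 4)^-1).
  apply: contra_neq z3 => k0; have -> : z ^+ 3 = (z^-1 + (z ^+ 4)^-1) * z ^+ 4 + 1 - 2.
    by field.
  by rewrite k0 mul0r add0r two0 subr0.
rewrite frobqD !exprVn exprAC Uroots_frob // !invrK.
by field; rewrite z_nz oner_neq0.
Qed.

Definition tri_shift (i : 'I_4) : F := [:: 1; t^-1; t; t ^+ 2]`_i.
Definition tri_point (i : 'I_4) : F := [:: t ^+ 2; t; t^-1; 1]`_i.

Lemma tri_shift_block i : block (tri_shift i) \in blocksW F q (q - 4).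
Proof.
have block_twisted z : z \in U -> z ^+ 3 != 1 -> block z \in blocksW F q (q - 4).
  by move=> zU z3; have [k] := frob_twist_exists zU z3; apply: block_in_design.
have tU := t_U.
case: i => [[|[|[|[|//]]]] i_lt]; rewrite /tri_shift /=.
- by apply: (@block_in_design 1 1); rewrite ?inE ?expr1n ?mulr1 ?oner_neq0.
- by apply: block_twisted; rewrite ?UrootsV // exprVn invr_eq1 t_expr_neq1 //; lia.
- by apply: block_twisted; rewrite // t_expr_neq1 //; lia.
- by apply: block_twisted; rewrite ?UrootsX // -exprM t_expr_neq1 //; lia.
Qed.

Lemma in_block z u : z != 0 -> u \in U -> (u \in block z) = (z^-1 * u \notin zeros_base).
Proof. by move=> z_nz uU; rewrite /block in_setD uU andbT in_set mem_zeros. Qed.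

Lemma tri_point_U i : tri_point i \in U.
Proof.
have tU := t_U.
by case: i => [[|[|[|[|//]]]] i_lt]; rewrite /tri_point /= ?UrootsV ?UrootsX // inE expr1n.
Qed.

Lemma tri_shift_neq0 i : tri_shift i != 0.
Proof.
have t_nz := t_neq0.
by case: i => [[|[|[|[|//]]]] i_lt]; rewrite /tri_shift /= ?oner_neq0 ?invr_eq0 ?expf_neq0.
Qed.

Lemma tri_point_notin_block (i j : 'I_4) : (i < j)%N -> tri_point j \notin block (tri_shift i).
Proof.
have t_nz := t_neq0.
rewrite in_block ?tri_shift_neq0 ?tri_point_U // negbK.
case: i => [[|[|[|[|//]]]] i_lt]; case: j => [[|[|[|[|//]]]] j_lt] //= _;
  rewrite /tri_shift /tri_point /= ?invr1 ?invrK ?mul1r ?mulr1 ?mulfV //;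
  by rewrite !inE eqxx ?orbT.
Qed.

Lemma tri_point_in_block i : tri_point i \in block (tri_shift i).
Proof.
have t_nz := t_neq0.
have sqr_t : t ^+ 2 \notin zeros_base by apply: sqr_notin_zeros_base; rewrite mem_head.
have sqr_tV : t^-1 ^+ 2 \notin zeros_base.
  by apply: sqr_notin_zeros_base; rewrite !inE eqxx orbT.
rewrite in_block ?tri_shift_neq0 ?tri_point_U //.
case: i => [[|[|[|[|//]]]] i_lt]; rewrite /tri_shift /tri_point /=.
- by rewrite invr1 mul1r.
- by rewrite invrK -expr2.
- by rewrite -expr2.
- by rewrite mulr1 -exprVn.
Qed.

Lemma rank_nz_incidence_ge4 (K : finFieldType) (M : 'M[K]_(#|blocksW F q (q - 4)|, #|U|)) :
  nz_incidence M -> (4 <= \rank M)%N.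
Proof.
move=> M_nz; pose r i := enum_rank_in (tri_shift_block ord0) (block (tri_shift i)).
pose c i := enum_rank_in (tri_point_U ord0) (tri_point i).
have M_rc i j : (M (r i) (c j) != 0) = (tri_point j \in block (tri_shift i)).
  by rewrite M_nz !enum_rankK_in ?tri_shift_block ?tri_point_U.
apply: (rank_geq_triangular (r := r) (c := c)) => [i j ij | i].
  by apply/eqP; rewrite -[_ == 0]negbK M_rc tri_point_notin_block.
by rewrite M_rc tri_point_in_block.
Qed.

(** * Upper bound: a rank-4 factorization *)

Section UpperBound.

Variables (K : finFieldType) (phi : {rmorphism K -> F}).
Hypothesis cardK : #|K| = q.

Definition preim (y : F) : K := odflt 0 [pick x | phi x == y].

Lemma preimK y : y ^+ q = y -> phi (preim y) = y.
Proof.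
rewrite -cardK => /(fmorph_finField_onto phi)[x0 <-].
by rewrite /preim; case: pickP => [x /eqP | /(_ x0)] //; rewrite eqxx.
Qed.

Definition block_coefs (S : {set F}) : F * F * F * F :=
  odflt (0, 0, 0, 0) [pick a | S == trSupport q a.1.1.1 a.1.1.2 a.1.2 a.2].

Lemma block_coefsP S : S \in blocksW F q (q - 4) ->
  let a := block_coefs S in S = trSupport q a.1.1.1 a.1.1.2 a.1.2 a.2.
Proof.
rewrite inE => /existsP[a0 /andP[/eqP S_a0 _]].
by rewrite /block_coefs; case: pickP => [a /eqP | /(_ a0)] //; rewrite S_a0 eqxx.
Qed.

Definition trace_coefs (a : F * F * F * F) (i : 'I_4) : F :=
  let al := a.1.1.1 + a.1.1.2 ^+ q in let be := a.1.2 + a.2 ^+ q in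
  [:: coord_1 t al; coord_th t al; coord_1 t be; coord_th t be]`_i.

Definition trace_basis (u : F) (i : 'I_4) : F :=
  [:: trq q (u ^+ 3); trq q (t * u ^+ 3); trq q (u ^+ 5); trq q (t * u ^+ 5)]`_i.

Lemma trace_coefs_fixed (a : F * F * F * F) (i : 'I_4) :
  trace_coefs a i ^+ q = trace_coefs a i.
Proof.
have t_nfix := t_nfixed.
by case: i => [[|[|[|[|//]]]] i_lt]; rewrite /trace_coefs /= ?coord_1_fixed ?coord_th_fixed.
Qed.

Lemma trace_basis_fixed u (i : 'I_4) : trace_basis u i ^+ q = trace_basis u i.
Proof. by case: i => [[|[|[|[|//]]]] i_lt]; rewrite /trace_basis /= trq_frob. Qed.

Lemma trq_C35_coords (a : F * F * F * F) u : u \in U ->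
  trq q (C35 q a.1.1.1 a.1.1.2 a.1.2 a.2 u) = \sum_(i < 4) trace_coefs a i * trace_basis u i.
Proof.
move=> uU; rewrite trq_C35 //; last by lia.
rewrite (trq_mul_decomp t_nfixed (a.1.1.1 + _)) (trq_mul_decomp t_nfixed (a.1.2 + _)).
rewrite !big_ord_recl big_ord0 addr0 /trace_coefs /trace_basis /=.
by rewrite !addrA.
Qed.

Definition coef_mx : 'M[K]_(#|blocksW F q (q - 4)|, 4) :=
  \matrix_(S, i) preim (trace_coefs (block_coefs (enum_val S)) i).

Definition basis_mx : 'M[K]_(4, #|U|) :=
  \matrix_(i, j) preim (trace_basis (enum_val j) i).

Lemma rmorph_coef_basis S (j : 'I_#|U|) :
  phi ((coef_mx *m basis_mx) S j)
  = let a := block_coefs (enum_val S) in trq q (C35 q a.1.1.1 a.1.1.2 a.1.2 a.2 (enum_val j)).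
Proof.
rewrite mxE rmorph_sum /= trq_C35_coords ?enum_valP //; apply: eq_bigr => i _.
by rewrite !mxE rmorphM !preimK ?trace_coefs_fixed ?trace_basis_fixed.
Qed.

Lemma nz_incidence_coef_basis : nz_incidence (coef_mx *m basis_mx).
Proof.
move=> S j; rewrite -(fmorph_eq0 phi) rmorph_coef_basis.
by rewrite [in RHS](block_coefsP (enum_valP S)) /trSupport in_set enum_valP.
Qed.

Lemma rank_coef_basis : (\rank (coef_mx *m basis_mx) <= 4)%N.
Proof. exact: leq_trans (mxrankM_maxr _ _) (rank_leq_row _). Qed.

End UpperBound.

Lemma design_dim_eq4 (K : finFieldType) (phi : {rmorphism K -> F}) :
  #|K| = q -> design_dim_eq K U (blocksW F q (q - 4)) 4.
Proof.
move=> cardK; split; last exact: rank_nz_incidence_ge4.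
exists (coef_mx phi *m basis_mx phi); split; first exact: nz_incidence_coef_basis.
apply/eqP; rewrite eqn_leq rank_coef_basis rank_nz_incidence_ge4 //.
exact: nz_incidence_coef_basis.
Qed.

End TraceCode.

Theorem theorem31 (m : nat) (hm : (6 <= m)%N) (hev : ~~ odd m)
  (K F : finFieldType) (hK : #|K| = (2 ^ m)%N) (hF : #|F| = ((2 ^ m) ^ 2)%N) :
  design_dim_eq K (Uroots F (2 ^ m)) (blocksW F (2 ^ m) (2 ^ m - 4)) 4.
Proof.
have pchar2K : 2%N \in [pchar K] by apply: (card_finPcharP hK).
have pchar2F : 2%N \in [pchar F] by apply: (card_finPcharP (n := (m * 2)%N)); rewrite // expnM.
set q := (2 ^ m)%N in hK hF *.
have q_pchar : [pchar F].-nat q by rewrite /q pnatX pnatE ?pchar2F.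
have q_gt5 : (5 < q)%N by apply: leq_trans (leq_pexp2l _ hm).
have q_mod3 : (q %% 3 = 1)%N.
  by rewrite /q -(odd_double_half m) (negbTE hev) -mul2n expnM -modnXm exp1n.
have q2_pred : ((q ^ 2).-1 = q.+1 * q.-1)%N by case: (q) q_gt5 => // n _; nia.
have [t t_prim] : exists t : F, q.+1.-primitive_root t.
  by apply: finField_prim_root_dvd; rewrite hF q2_pred dvdn_mulr.
have [w w_prim] : exists w : F, 3.-primitive_root w.
  apply: finField_prim_root_dvd; rewrite hF q2_pred dvdn_mull //.
  by apply/dvdnP; exists (q %/ 3)%N; lia.
have cardF : #|F| = (#|K| ^ 2)%N by rewrite hK.
exact: (design_dim_eq4 pchar2F q_pchar hF t_prim q_gt5 w_prim q_mod3
          (finField_embed pchar2K pchar2F cardF) hK).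
Qed.
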